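(* Let $W_\omega$ and $W_\eta$ be subnormal unilateral weighted shifts with weight sequences $\omega=(\omega_k)_{k\ge0}$, $\eta=(\eta_k)_{k\ge0}$, and assume that their canonical embedding $W_{(\alpha,\beta)}$ is commuting. Then there exists $r>0$ such that $\eta_k=r\,\omega_k$ for all $k\ge0$.
   Context: For a bounded sequence of positive numbers $\omega$, $W_\omega$ is the unilateral weighted shift $e_n\mapsto\omega_ne_{n+1}$ on $\ell^2(\mathbb{Z}_+)$. The canonical embedding of $(W_\omega,W_\eta)$ is the 2-variable weighted shift $(T_1,T_2)$ on $\ell^2(\mathbb{Z}_+^2)$ given by $T_1e_{(k_1,k_2)}=\omega_{k_1+k_2}e_{(k_1+1,k_2)}$, $T_2e_{(k_1,k_2)}=\eta_{k_1+k_2}e_{(k_1,k_2+1)}$. An operator is subnormal if it is the restriction of a normal operator to an invariant subspace. *)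

From HB Require Import structures.
From mathcomp Require Import all_boot all_order all_algebra.
From mathcomp Require Import reals.
From mathcomp Require Import complex.
Set Implicit Arguments. Unset Strict Implicit. Unset Printing Implicit Defensive.
Import Order.TTheory GRing.Theory Num.Theory.
Local Open Scope ring_scope.

Section Defs.
Variable R : realType.
Local Notation C := (R[i]).

Definition sqmod (z : C) : R := complex.Re z ^+ 2 + complex.Im z ^+ 2.

Definition seq_lim (u : nat -> R) (l : R) : Prop :=
  forall e : R, 0 < e -> exists N : nat, forall n : nat, (N <= n)%N -> `|u n - l| < e.

Definition l2norm2_is (f : nat -> C) (s : R) : Prop :=
  seq_lim (fun n => \sum_(k < n) sqmod (f k)) s.

Definition in_l2 (f : nat -> C) : Prop := exists s, l2norm2_is f s.

(* l^2(Z_+^2): square-summable families indexed by pairs (k1,k2)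
   (nonnegative terms, so convergence of square partial sums = summability) *)
Definition in_l2_2 (f : nat -> nat -> C) : Prop :=
  exists s, seq_lim (fun n => \sum_(i < n) \sum_(j < n) sqmod (f i j)) s.

(* unilateral weighted shift W_w : e_n |-> w_n e_{n+1} *)
Definition wshift (w : nat -> R) (f : nat -> C) : nat -> C :=
  fun n => match n with 0%N => 0 | m.+1 => (w m)%:C%C * f m end.

(* canonical embedding (T1,T2) of (W_om, W_et):
   T1 e_(k1,k2) = om_(k1+k2) e_(k1+1,k2), T2 e_(k1,k2) = et_(k1+k2) e_(k1,k2+1) *)
Definition cemb1 (om : nat -> R) (f : nat -> nat -> C) : nat -> nat -> C :=
  fun k1 k2 => match k1 with 0%N => 0 | m.+1 => (om (m + k2)%N)%:C%C * f m k2 end.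
Definition cemb2 (et : nat -> R) (f : nat -> nat -> C) : nat -> nat -> C :=
  fun k1 k2 => match k2 with 0%N => 0 | m.+1 => (et (k1 + m)%N)%:C%C * f k1 m end.

Definition canonical_embedding_commuting (om et : nat -> R) : Prop :=
  forall f, in_l2_2 f -> cemb1 om (cemb2 et f) = cemb2 et (cemb1 om f).

Definition hnorm (K : lmodType C) (ip : K -> K -> C) (x : K) : R :=
  Num.sqrt (complex.Re (ip x x)).

Definition is_hilbert (K : lmodType C) (ip : K -> K -> C) : Prop :=
  [/\ (forall x y z, ip (x + y) z = ip x z + ip y z),
      (forall (a : C) x y, ip (a *: x) y = a * ip x y),
      (forall x y, ip y x = conjc (ip x y)),
      (forall x, 0 <= ip x x) /\ (forall x, ip x x = 0 -> x = 0)
    &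
      forall u : nat -> K,
        (forall e : R, 0 < e -> exists N : nat, forall m n : nat,
            (N <= m)%N -> (N <= n)%N -> hnorm ip (u m - u n) < e) ->
        exists l : K, forall e : R, 0 < e -> exists N : nat, forall n : nat,
            (N <= n)%N -> hnorm ip (u n - l) < e].

Definition normal_op (K : lmodType C) (ip : K -> K -> C) (N Ns : K -> K) : Prop :=
  [/\ (forall x y, N (x + y) = N x + N y),
      (forall (a : C) x, N (a *: x) = a *: N x),
      (exists M : R, forall x, hnorm ip (N x) <= M * hnorm ip x),
      (forall x y, ip (N x) y = ip x (Ns y))
    & (forall x, N (Ns x) = Ns (N x))].

(* T on l^2(Z_+) is subnormal: there are a Hilbert space K, a linear isometry
   J : l^2(Z_+) -> K, and a normal operator N on K with N J = J T, i.e. T is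
   (unitarily equivalent to) the restriction of N to the invariant subspace
   J(l^2(Z_+)). *)
Definition subnormal (T : (nat -> C) -> (nat -> C)) : Prop :=
  exists (K : lmodType C) (ip : K -> K -> C), is_hilbert ip /\
  exists (J : (nat -> C) -> K) (N Ns : K -> K),
    [/\ (forall f g, in_l2 f -> in_l2 g -> J (fun k => f k + g k) = J f + J g),
        (forall (a : C) f, in_l2 f -> J (fun k => a * f k) = a *: J f),
        (forall f s, l2norm2_is f s -> complex.Re (ip (J f) (J f)) = s),
        normal_op ip N Ns
      & forall f, in_l2 f -> N (J f) = J (T f)].

End Defs.

(* Commutativity of the canonical embedding, tested on the unit vector
   e_(0,k), reads om_(k+1) et_k = et_(k+1) om_k; hence the ratio et_k / om_k
   does not depend on k. *)
From HB Require Import structures.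
From mathcomp Require Import all_boot all_order all_algebra.
From mathcomp Require Import reals.
From mathcomp Require Import complex.
Import Order.TTheory GRing.Theory Num.Theory.
Local Open Scope ring_scope.

Lemma sum_ord_eq1 (S : pzSemiRingType) n a :
  (a < n)%N -> \sum_(i < n) ((i == a :> nat)%:R : S) = 1.
Proof.
move=> lt_an; rewrite (bigD1 (Ordinal lt_an)) //= eqxx big1 ?addr0 // => i.
by rewrite -(inj_eq val_inj) /= => /negbTE ->.
Qed.

Section UnitVector.
Variable R : realType.

Definition unit_vec2 (a b : nat) : nat -> nat -> R[i] :=
  fun i j => if (i == a) && (j == b) then 1 else 0.

Lemma sqmod_unit_vec2 a b i j :
  sqmod (unit_vec2 a b i j) = ((i == a) && (j == b))%:R.
Proof.
by rewrite /sqmod /unit_vec2; case: ifP => _ /=; rewrite ?expr1n expr0n addr0.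
Qed.

Lemma unit_vec2_l2 a b : in_l2_2 (unit_vec2 a b).
Proof.
exists 1 => e e_gt0; exists (maxn a b).+1 => n; rewrite gtn_max => /andP[an bn].
suff -> : \sum_(i < n) \sum_(j < n) sqmod (unit_vec2 a b i j) = 1.
  by rewrite subrr normr0.
under eq_bigr => i _ do
  under eq_bigr => j _ do rewrite sqmod_unit_vec2 -mulnb natrM.
by under eq_bigr => i _ do rewrite -mulr_sumr sum_ord_eq1 // mulr1; exact: sum_ord_eq1.
Qed.

End UnitVector.

Lemma canonical_embedding_commuting_weights (R : realType) (om et : nat -> R) :
  canonical_embedding_commuting om et -> forall k, om k.+1 * et k = et k.+1 * om k.
Proof.
move=> commuting k.
have := congr1 (fun F => complex.Re (F 1%N k.+1)) (commuting _ (unit_vec2_l2 R 0 k)).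
rewrite /cemb1 /cemb2 /unit_vec2 /= eqxx !mulr1 !add0n add1n /=.
by rewrite mulr0 !subr0.
Qed.

Lemma proportional_of_cross_ratio (F : fieldType) (u v : nat -> F) :
  (forall k, u k != 0) -> (forall k, u k.+1 * v k = v k.+1 * u k) ->
  forall k, v k = v 0%N / u 0%N * u k.
Proof.
move=> u_neq0 cross; elim=> [|k IH]; first by rewrite divfK.
by apply: (mulIf (u_neq0 k)); rewrite -cross IH mulrCA mulrA.
Qed.

Theorem lemma3p11 (R : realType) (om et : nat -> R) :
  (forall k, 0 < om k) -> (forall k, 0 < et k) ->
  (exists M : R, forall k, om k <= M) -> (exists M : R, forall k, et k <= M) ->
  subnormal (wshift om) -> subnormal (wshift et) ->
  canonical_embedding_commuting om et ->
  exists r : R, 0 < r /\ forall k, et k = r * om k.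
Proof.
move=> om_gt0 et_gt0 _ _ _ _ commuting.
exists (et 0%N / om 0%N); split; first by rewrite divr_gt0.
apply: proportional_of_cross_ratio => [k|]; first by rewrite gt_eqF.
exact: canonical_embedding_commuting_weights.
Qed.
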